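(* Let $k\in\mathbb Z_{>0}$. For $0\le l\le k$ and $N\ge1$, $$d^{(N+1)}_{k,l}(0)=\sum_{l'=0}^k\mathcal D^{l'}_l\,d^{(N)}_{k,l'}(0),\qquad d^{(1)}_{k,l}(0)=l+1,$$ where $\mathcal D^{l'}_l=(\min(l,k-l')+1)\cdot(\min(l',k-l)+1)$.
   Context: The level $k$ Verlinde algebra $\mathcal V_k$ has basis $\pi_0,\dots,\pi_k$ and product $\pi_l\pi_{l'}=\sum_i\pi_i$, the sum over $|l-l'|\le i\le\min(2k-l-l',l+l')$ with $i+l-l'$ even. The integers $d^{(N)}_{k,l}(0)$ are defined by $(\pi_0+2\pi_1+\cdots+(k+1)\pi_k)^N=\sum_{l=0}^kd^{(N)}_{k,l}(0)\pi_l$. *)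

From mathcomp Require Import all_boot all_order all_algebra.
Set Implicit Arguments. Unset Strict Implicit. Unset Printing Implicit Defensive.
Import GRing.Theory Num.Theory.
Local Open Scope ring_scope.

(* Elements of the level-k Verlinde algebra V_k: integer coefficient vectors
   on the basis pi_0, ..., pi_k, indexed by 'I_k.+1. *)
Definition verl (k : nat) := {ffun 'I_k.+1 -> int}.

Definition vstruct (k l l' i : nat) : bool :=
  [&& (maxn l l' - minn l l' <= i)%N,
      (i <= minn (2 * k - l - l') (l + l'))%N &
      ~~ odd (i + l + l')].

Definition vpi (k : nat) (j : 'I_k.+1) : verl k := [ffun i => (i == j)%:R].

Definition vmul (k : nat) (x y : verl k) : verl k :=
  [ffun i : 'I_k.+1 => \sum_(l < k.+1) \sum_(l' < k.+1)
      x l * y l' *+ vstruct k l l' i].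

Definition vsum (k : nat) : verl k := [ffun l : 'I_k.+1 => (l.+1)%:Z].

Definition vpow (k : nat) (x : verl k) (N : nat) : verl k :=
  iter N (fun y => vmul y x) (vpi ord0).

Definition dcoef (k N : nat) (l : 'I_k.+1) : int := vpow (vsum k) N l.

Definition Dmat (k l l' : nat) : int :=
  ((minn l (k - l')).+1 * (minn l' (k - l)).+1)%:Z.
Arguments dcoef k N l : clear implicits.
Arguments Dmat k l l' : clear implicits.

From mathcomp Require Import all_boot all_order all_algebra zify.
Import GRing.Theory.

(* The coefficient of pi_l in x * (pi_0 + 2 pi_1 + ... + (k+1) pi_k) is
   sum_a x_a sum_b (b+1) [pi_l occurs in pi_a pi_b].  For fixed a and l, the
   admissible b form the arithmetic progression of step 2 from |a-l| to
   min(a+l, 2k-a-l), with n+1 terms where n = min(a, l, k-a, k-l); summing b+1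
   over it gives (n+1)(|a-l|+n+1).  With p = min(l, k-a) and q = min(a, k-l)
   one has n = min(p,q) and |a-l| + n = max(p,q), so this product is
   (p+1)(q+1). *)

Lemma sum_succ_parity_window (K lo n : nat) : (lo + n.*2 < K)%N ->
  (\sum_(b < K | [&& lo <= b, b <= lo + n.*2 & ~~ odd (b + lo)]) b.+1
     = n.+1 * (lo + n).+1)%N.
Proof.
elim: n => [|n IHn] ltK.
  rewrite (big_pred1 (Ordinal ltK)) => [|b]; first by rewrite /= !addn0 mul1n.
  by rewrite /= -val_eqE /=; apply/idP/idP; lia.
rewrite (bigD1 (Ordinal ltK)) /=; last by lia.
rewrite (eq_bigl (fun b : 'I_K => [&& lo <= b, b <= lo + n.*2 & ~~ odd (b + lo)])).
  by rewrite IHn; lia.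
by move=> b /=; rewrite -val_eqE /=; apply/idP/idP; lia.
Qed.

Lemma mulSn_minn_maxn (p q : nat) : ((minn p q).+1 * (maxn p q).+1 = p.+1 * q.+1)%N.
Proof. by case: leqP => // _; rewrite mulnC. Qed.

Section FusionWindow.

Variables (k a i : nat).
Hypotheses (le_ak : (a <= k)%N) (le_ik : (i <= k)%N).

Local Notation lo := (maxn a i - minn a i)%N.
Local Notation n := (minn (minn a i) (minn (k - a) (k - i))).

Lemma vstruct_window (b : nat) :
  vstruct k a b i = [&& lo <= b, b <= lo + n.*2 & ~~ odd (b + lo)]%N.
Proof.
rewrite /vstruct (_ : odd (i + a + b) = odd (b + lo)); last by lia.
by rewrite !andbA; congr (_ && _); apply/andP/andP => -[]; lia.
Qed.

Lemma window_sumE :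
  (n.+1 * (lo + n).+1 = (minn i (k - a)).+1 * (minn a (k - i)).+1)%N.
Proof.
by rewrite -(mulSn_minn_maxn (minn i (k - a))); congr (_.+1 * _.+1); lia.
Qed.

Lemma sum_succ_vstruct :
  (\sum_(b < k.+1 | vstruct k a b i) b.+1
     = (minn i (k - a)).+1 * (minn a (k - i)).+1)%N.
Proof.
rewrite (eq_bigl _ _ (fun b : 'I_k.+1 => vstruct_window b)) -window_sumE.
by apply: sum_succ_parity_window; lia.
Qed.

End FusionWindow.

Local Open Scope ring_scope.

Lemma vmul_vsumE (k : nat) (x : verl k) (l : 'I_k.+1) :
  vmul x (vsum k) l = \sum_(a < k.+1) Dmat k l a * x a.
Proof.
rewrite ffunE; apply: eq_bigr => a _.
rewrite mulrC /Dmat -sum_succ_vstruct ?leq_ord // -natz natr_sum mulr_sumr.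
rewrite [RHS]big_mkcond; apply: eq_bigr => b _.
by rewrite ffunE natz; case: vstruct; rewrite ?mulr0.
Qed.

Lemma dcoefS (k N : nat) (l : 'I_k.+1) :
  dcoef k N.+1 l = \sum_(l' < k.+1) Dmat k l l' * dcoef k N l'.
Proof. exact: vmul_vsumE. Qed.

Lemma dcoef0 (k : nat) (l : 'I_k.+1) : dcoef k 0 l = (l == ord0)%:R.
Proof. by rewrite /dcoef /= ffunE. Qed.

Theorem lemma3p2p1 (k : nat) (hk : (0 < k)%N) :
  (forall (N : nat), (1 <= N)%N -> forall l : 'I_k.+1,
     dcoef k N.+1 l = \sum_(l' < k.+1) Dmat k l l' * dcoef k N l') /\
  (forall l : 'I_k.+1, dcoef k 1 l = (l.+1)%:Z).
Proof.
split=> [N _ l | l]; first exact: dcoefS.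
rewrite dcoefS (bigD1 ord0) //= big1 => [|a /negbTE nz_a]; last first.
  by rewrite dcoef0 nz_a mulr0.
rewrite dcoef0 eqxx mulr1 addr0 /Dmat subn0 min0n muln1.
by rewrite (minn_idPl (leq_ord l)).
Qed.
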